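(* (i) Let $\theta\in[0,2\pi]$. If $\lambda_\infty>\|V\|_\infty$, then for no $s\in(0,L]$ is $\lambda_\infty$ an eigenvalue of $H_{\theta,s}$; in particular $\Gamma_2$ has no crossings with $\operatorname{Train}(X\times X)$ and $B_2=0$ (for any $s_0\in(0,L)$). (ii) Let $\theta\in(0,2\pi)$. If $\lambda_\infty>\|V\|_\infty$ and $0<s_0<\frac12\min\{\theta,2\pi-\theta\}\,(\|V\|_\infty+\lambda_\infty)^{-1/2}$, then no $\lambda\in[0,\lambda_\infty]$ is an eigenvalue of $H_{\theta,s_0}$; in particular $\Gamma_1$ has no crossings and $B_1=0$.
   Context: $n\ge1$, $L>0$; $V:\mathbb{R}\to\mathbb{R}^{n\times n}$ symmetric, with real piecewise continuous $2L$-periodic entries; $\|V\|_\infty=\sup_{x\in[-L,L]}\|V(x)\|$. For $\theta\in[0,2\pi]$, $s\in(0,L]$, $H_{\theta,s}$ is $y\mapsto y''+V(x)y$ in $L^2([-s,s];\mathbb{C}^n)$ with domain $\{y: y,y'\in AC,\ y''\in L^2,\ y(s)=e^{i\theta}y(-s),\ y'(s)=e^{i\theta}y'(-s)\}$. Notation: $\otimes$ Kronecker product, $\oplus$ block-diagonal sum, $J=\begin{pmatrix}0&1\\-1&0\end{pmatrix}$. $A(x,\lambda)=\begin{pmatrix}0_{2n}&I_{2n}\\ \lambda I_{2n}-V(x)\otimes I_2&0_{2n}\end{pmatrix}$, $\mathfrak{u}(s,\theta)=\begin{pmatrix}0&-\theta/(2s)\\ \theta/(2s)&0\end{pmatrix}$,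 $B(s,\theta)=I_{2n}\otimes\mathfrak{u}(s,\theta)$. $Y_{s,\lambda}$: absolutely continuous solutions on $[-L,L]$ of $\mathbf{p}'=A(x,\lambda)\mathbf{p}$, $\mathbf{w}'=B(s,\theta)\mathbf{w}$ ($\mathbf{p},\mathbf{w}\in\mathbb{R}^{4n}$), no boundary conditions. $\Phi_s^\lambda(\mathbf{p},\mathbf{w})=(\mathbf{p}(-s),\mathbf{w}(-s),\mathbf{p}(s),\mathbf{w}(s))^\top$. $\omega(v_1,v_2)=\langle v_1,\Omega v_2\rangle$, $\Omega=(J\otimes I_{2n})\oplus(J^\top\otimes I_{2n})\oplus(J^\top\otimes I_{2n})\oplus(J\otimes I_{2n})$. $X=\{(p,q,w,z)\in\mathbb{R}^{8n}: p=w, q=z\}$. A crossing of a path $t\mapsto\Phi(t)$ of Lagrangian planes is a parameter value $t_0$ with $\Phi(t_0)\cap(X\times X)\neq\{0\}$; the crossing form $Q$ on $\Phi(t_0)\cap(X\times X)$ is $Q(v,v)=\frac{d}{dt}\omega(v,\phi(t)v)|_{t_0}$ where $\Phi(t)$ is the graph of $\phi(t):\Phi(t_0)\to W$, $W$ a fixed complement. Curves for $s_0\in(0,L)$, $\lambda_\infty>0$: $\Gamma_1:\lambda\mapsto\Phi_{s_0}^\lambda(Y_{s_0,\lambda})$, $\lambda\in[0,\lambda_\infty]$; $\Gamma_2:s\mapsto\Phi_s^{\lambda_\infty}(Y_{s,\lambda_\infty})$, $s\in[s_0,L]$. For a path $\Gamma_i$ on $[a_i,b_i]$, $B_i=|\tfrac12\operatorname{sign}Q(a_i)|+\sum_{a_i<t<b_i}|\operatorname{sign}Q(t)|+|\tfrac12\operatorname{sign}Q(b_i)|$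 (number of crossings counted with multiplicity, regardless of sign). *)

From Stdlib Require Import Reals Lra Lia List.
Open Scope R_scope.

Fixpoint rsum (f : nat -> R) (m : nat) : R :=
  match m with O => 0 | S m' => rsum f m' + f m' end.

(** Vectors of R^d are functions nat -> R (only indices < d matter);
    matrices are functions nat -> nat -> R.  A matrix-valued function
    V : R -> R^{n x n} is given as  V : nat -> nat -> R -> R, entry (i,j) at x. *)

Definition is_opnorm (n : nat) (M : nat -> nat -> R) (r : R) : Prop :=
  is_lub (fun t => exists v : nat -> R,
             rsum (fun j => v j ^ 2) n <= 1 /\
             t = sqrt (rsum (fun i => (rsum (fun j => M i j * v j) n) ^ 2) n)) r.

Definition is_Vsupnorm (n : nat) (L : R) (V : nat -> nat -> R -> R) (N : R) : Prop :=
  is_lub (fun t => exists x, -L <= x <= L /\ is_opnorm n (fun i j => V i j x) t) N.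

Definition piecewise_continuous (f : R -> R) : Prop :=
  forall a b : R, exists l : list R,
    (forall x, a <= x <= b -> ~ In x l -> continuity_pt f x) /\
    (forall x, In x l ->
       (exists r, limit1_in f (fun y => x < y) r x) /\
       (exists r, limit1_in f (fun y => y < x) r x)).

Definition cont_on (f : R -> R) (a b : R) : Prop :=
  forall x, a <= x <= b -> limit1_in f (fun y => a <= y <= b) (f x) x.

(** p : [a,b] -> R^d is an (absolutely continuous) solution of p' = F(x,p):
    continuous on [a,b] and satisfying the equation at every point of (a,b)
    outside a finite exceptional set. *)
Definition ac_sol (d : nat) (a b : R) (F : R -> (nat -> R) -> (nat -> R))
    (p : R -> nat -> R) : Prop :=
  (forall k, (k < d)%nat -> cont_on (fun t => p t k) a b) /\
  exists E : list R, forall x, a < x < b -> ~ In x E ->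
    forall k, (k < d)%nat -> derivable_pt_lim (fun t => p t k) x (F x (p x) k).

(** (V(x) (x) I_2) u, for u in R^{2n}; index 2i+a  <->  (i,a). *)
Definition VI2 (n : nat) (V : nat -> nat -> R -> R) (x : R) (u : nat -> R) : nat -> R :=
  fun k => rsum (fun j => V (k / 2)%nat j x * u (2 * j + k mod 2)%nat) n.

Definition A_apply (n : nat) (V : nat -> nat -> R -> R) (lam x : R) (p : nat -> R) : nat -> R :=
  fun k => if (k <? 2 * n)%nat then p (k + 2 * n)%nat
           else lam * p (k - 2 * n)%nat - VI2 n V x p (k - 2 * n)%nat.

(** B(s,theta) w = (I_{2n} (x) u(s,theta)) w for w in R^{4n},
    u = [[0, -theta/(2s)], [theta/(2s), 0]]. *)
Definition B_apply (s theta : R) (w : nat -> R) : nat -> R :=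
  fun k => if Nat.even k then - (theta / (2 * s)) * w (S k)
           else (theta / (2 * s)) * w (pred k).

Definition inY (n : nat) (V : nat -> nat -> R -> R) (L theta s lam : R)
    (p w : R -> nat -> R) : Prop :=
  ac_sol (4 * n) (- L) L (fun x v => A_apply n V lam x v) p /\
  ac_sol (4 * n) (- L) L (fun _ v => B_apply s theta v) w.

Definition Phi (n : nat) (s : R) (p w : R -> nat -> R) : nat -> R :=
  fun k => if (k <? 4 * n)%nat then p (- s) k
           else if (k <? 8 * n)%nat then w (- s) (k - 4 * n)%nat
           else if (k <? 12 * n)%nat then p s (k - 8 * n)%nat
           else w s (k - 12 * n)%nat.

(** X = {(p,q,w,z) in R^{8n} : p = w, q = z}, blocks of size 2n. *)
Definition inX (n : nat) (v : nat -> R) : Prop :=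
  forall k, (k < 2 * n)%nat ->
    v k = v (k + 4 * n)%nat /\ v (k + 2 * n)%nat = v (k + 6 * n)%nat.

Definition inXX (n : nat) (v : nat -> R) : Prop :=
  inX n v /\ inX n (fun k => v (k + 8 * n)%nat).

Definition is_crossing (n : nat) (V : nat -> nat -> R -> R) (L theta s lam : R) : Prop :=
  exists p w : R -> nat -> R,
    inY n V L theta s lam p w /\ inXX n (Phi n s p w) /\
    exists k, (k < 16 * n)%nat /\ Phi n s p w k <> 0.

(** lambda is an eigenvalue of H_{theta,s}: there is a nonzero y : [-s,s] -> C^n
    (realified: y k, index 2i = Re y_i, 2i+1 = Im y_i) with y, y' absolutely
    continuous, y'' + V y = lambda y, y(s) = e^{i theta} y(-s),
    y'(s) = e^{i theta} y'(-s).  dy plays the role of y'. *)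
Definition rot_bc (n : nat) (theta : R) (a b : nat -> R) : Prop :=
  forall i, (i < n)%nat ->
    b (2 * i)%nat = cos theta * a (2 * i)%nat - sin theta * a (2 * i + 1)%nat /\
    b (2 * i + 1)%nat = sin theta * a (2 * i)%nat + cos theta * a (2 * i + 1)%nat.

Definition is_eigenvalue (n : nat) (V : nat -> nat -> R -> R) (theta s lam : R) : Prop :=
  exists y dy : R -> nat -> R,
    (forall k, (k < 2 * n)%nat ->
       cont_on (fun t => y t k) (- s) s /\ cont_on (fun t => dy t k) (- s) s) /\
    (exists E : list R, forall x, - s < x < s -> ~ In x E ->
       forall k, (k < 2 * n)%nat ->
         derivable_pt_lim (fun t => y t k) x (dy x k) /\
         derivable_pt_lim (fun t => dy t k) x (lam * y x k - VI2 n V x (y x) k)) /\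
    rot_bc n theta (y (- s)) (y s) /\
    rot_bc n theta (dy (- s)) (dy s) /\
    (exists x k, - s <= x <= s /\ (k < 2 * n)%nat /\ y x k <> 0).

From Stdlib Require Import Reals Lra Lia List.
From Coquelicot Require Import Coquelicot.
Open Scope R_scope.

(** If [y'' + V y = lam y] on [[-s, s]] with [y(s) = e^{i th} y(-s)] and [y'(s) = e^{i th} y'(-s)],
    then [y . y'] takes the same value at both ends, so integrating
    [(y . y')' = |y'|^2 + lam |y|^2 - y . V y] gives [int (|y'|^2 + (lam - N) |y|^2) <= 0];
    for [lam > N] this forces [y = 0].  For smaller [lam] the negative term is absorbed by a
    Wirtinger inequality for twisted functions, [int |y'|^2 >= (th' / (2 s))^2 int |y|^2] with
    [th' = min th (2 pi - th)]: rotating [y] by [e^{- i v x}] makes it periodic, and the periodic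
    Wirtinger inequality follows from Picone's identity with a shifted cotangent.  A crossing of
    [Gamma_1] or [Gamma_2] produces such a [y] (the first half of [p]), because the [w]-component
    rotates by the angle [th] between [-s] and [s] and agrees with [p] at both ends. *)

Lemma rsum_ext f g m : (forall k, (k < m)%nat -> f k = g k) -> rsum f m = rsum g m.
Proof.
  induction m as [|m IH]; simpl; intros H; auto.
  rewrite IH, H by (auto; intros; apply H; lia); reflexivity.
Qed.

Lemma rsum_plus f g m : rsum (fun k => f k + g k) m = rsum f m + rsum g m.
Proof. induction m; simpl; [lra|]. rewrite IHm; lra. Qed.

Lemma rsum_minus f g m : rsum (fun k => f k - g k) m = rsum f m - rsum g m.
Proof. induction m; simpl; [lra|]. rewrite IHm; lra. Qed.

Lemma rsum_scal c f m : rsum (fun k => c * f k) m = c * rsum f m.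
Proof. induction m; simpl; [lra|]. rewrite IHm; lra. Qed.

Lemma rsum0 m : rsum (fun _ => 0) m = 0.
Proof. induction m; simpl; auto; rewrite IHm; lra. Qed.

Lemma rsum_le f g m : (forall k, (k < m)%nat -> f k <= g k) -> rsum f m <= rsum g m.
Proof.
  induction m as [|m IH]; simpl; intros H; [lra|].
  assert (rsum f m <= rsum g m) by (apply IH; intros; apply H; lia).
  assert (f m <= g m) by (apply H; lia). lra.
Qed.

Lemma rsum_ge0 f m : (forall k, (k < m)%nat -> 0 <= f k) -> 0 <= rsum f m.
Proof. intros H. rewrite <- (rsum0 m). apply rsum_le; auto. Qed.

Lemma rsum_term_le f m k :
  (forall j, (j < m)%nat -> 0 <= f j) -> (k < m)%nat -> f k <= rsum f m.
Proof.
  induction m as [|m IH]; simpl; intros H Hk; [lia|].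
  destruct (Nat.eq_dec k m) as [->|Hne].
  - assert (0 <= rsum f m) by (apply rsum_ge0; intros; apply H; lia). lra.
  - assert (f k <= rsum f m) by (apply IH; [intros; apply H; lia|lia]).
    assert (0 <= f m) by (apply H; lia). lra.
Qed.

Lemma rsum_ge0_eq0 f m :
  (forall k, (k < m)%nat -> 0 <= f k) -> rsum f m = 0 -> forall k, (k < m)%nat -> f k = 0.
Proof.
  intros H H0 k Hk. assert (f k <= rsum f m) by (apply rsum_term_le; auto).
  specialize (H k Hk). lra.
Qed.

Lemma rsum_abs f m : Rabs (rsum f m) <= rsum (fun k => Rabs (f k)) m.
Proof.
  induction m; simpl; [rewrite Rabs_R0; lra|].
  eapply Rle_trans; [apply Rabs_triang|lra].
Qed.

Lemma rsum_even_odd f m :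
  rsum f (2 * m) = rsum (fun i => f (2 * i)%nat + f (2 * i + 1)%nat) m.
Proof.
  induction m as [|m IH]; [reflexivity|].
  replace (2 * S m)%nat with (S (S (2 * m))) by lia.
  change (rsum f (2 * m) + f (2 * m)%nat + f (S (2 * m)) =
          rsum (fun i => f (2 * i)%nat + f (2 * i + 1)%nat) m + (f (2 * m)%nat + f (2 * m + 1)%nat)).
  rewrite IH. replace (2 * m + 1)%nat with (S (2 * m)) by lia. lra.
Qed.

(** Stdlib states these for [(f + g)%F] and the like; stated on lambdas, they can be [apply]ed. *)

Lemma cpt_plus f g x : continuity_pt f x -> continuity_pt g x -> continuity_pt (fun t => f t + g t) x.
Proof. intros; apply (continuity_pt_plus f g); auto. Qed.
Lemma cpt_minus f g x : continuity_pt f x -> continuity_pt g x -> continuity_pt (fun t => f t - g t) x.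
Proof. intros; apply (continuity_pt_minus f g); auto. Qed.
Lemma cpt_mult f g x : continuity_pt f x -> continuity_pt g x -> continuity_pt (fun t => f t * g t) x.
Proof. intros; apply (continuity_pt_mult f g); auto. Qed.
Lemma cpt_opp f x : continuity_pt f x -> continuity_pt (fun t => - f t) x.
Proof. intros; apply (continuity_pt_opp f); auto. Qed.
Lemma cpt_const c x : continuity_pt (fun _ => c) x.
Proof. apply continuity_pt_const. intros a b; auto. Qed.
Lemma cpt_id x : continuity_pt (fun t => t) x.
Proof. apply derivable_continuous_pt, derivable_pt_id. Qed.
Lemma cpt_sq f x : continuity_pt f x -> continuity_pt (fun t => f t ^ 2) x.
Proof. intros H. apply (continuity_pt_ext (fun t => f t * f t)); [intros; ring|]. now apply cpt_mult. Qed.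
Lemma cpt_comp f g x : continuity_pt f x -> continuity_pt g (f x) -> continuity_pt (fun t => g (f t)) x.
Proof. intros; apply (continuity_pt_comp f g); auto. Qed.
Lemma cpt_cos f x : continuity_pt f x -> continuity_pt (fun t => cos (f t)) x.
Proof. intros H. apply cpt_comp; auto. apply continuity_cos. Qed.
Lemma cpt_sin f x : continuity_pt f x -> continuity_pt (fun t => sin (f t)) x.
Proof. intros H. apply cpt_comp; auto. apply continuity_sin. Qed.
Lemma cpt_div f g x :
  continuity_pt f x -> continuity_pt g x -> g x <> 0 -> continuity_pt (fun t => f t / g t) x.
Proof. intros; apply (continuity_pt_div f g); auto. Qed.
Lemma cpt_rsum (f : nat -> R -> R) m x :
  (forall k, (k < m)%nat -> continuity_pt (f k) x) -> continuity_pt (fun t => rsum (fun k => f k t) m) x.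
Proof.
  induction m; simpl; intros H; [apply cpt_const|].
  apply cpt_plus; [apply IHm; intros|]; apply H; lia.
Qed.

Ltac cont := repeat first [ apply cpt_plus | apply cpt_minus | apply cpt_mult | apply cpt_opp
  | apply cpt_sq | apply cpt_cos | apply cpt_sin | apply cpt_id | apply cpt_const ].

Lemma dpl_plus f g x a b : derivable_pt_lim f x a -> derivable_pt_lim g x b ->
  derivable_pt_lim (fun t => f t + g t) x (a + b).
Proof. intros; apply (derivable_pt_lim_plus f g); auto. Qed.
Lemma dpl_minus f g x a b : derivable_pt_lim f x a -> derivable_pt_lim g x b ->
  derivable_pt_lim (fun t => f t - g t) x (a - b).
Proof. intros; apply (derivable_pt_lim_minus f g); auto. Qed.
Lemma dpl_mult f g x a b : derivable_pt_lim f x a -> derivable_pt_lim g x b ->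
  derivable_pt_lim (fun t => f t * g t) x (a * g x + f x * b).
Proof. intros; apply (derivable_pt_lim_mult f g); auto. Qed.
Lemma dpl_opp f x a : derivable_pt_lim f x a -> derivable_pt_lim (fun t => - f t) x (- a).
Proof. intros; apply (derivable_pt_lim_opp f); auto. Qed.
Lemma dpl_sq f x a : derivable_pt_lim f x a -> derivable_pt_lim (fun t => f t ^ 2) x (2 * f x * a).
Proof.
  intros H. apply (derivable_pt_lim_ext (fun t => f t * f t)); [intros; ring|].
  replace (2 * f x * a) with (a * f x + f x * a) by ring. now apply dpl_mult.
Qed.
Lemma dpl_eq f x a b : derivable_pt_lim f x a -> a = b -> derivable_pt_lim f x b.
Proof. now intros H <-. Qed.
Lemma dpl_rsum (f : nat -> R -> R) (d : nat -> R) m x :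
  (forall k, (k < m)%nat -> derivable_pt_lim (f k) x (d k)) ->
  derivable_pt_lim (fun t => rsum (fun k => f k t) m) x (rsum d m).
Proof.
  induction m; simpl; intros H; [apply derivable_pt_lim_const|].
  apply dpl_plus; [apply IHm; intros|]; apply H; lia.
Qed.

Lemma le_of_derive_ge0_except (H h : R -> R) (E : list R) a b : a <= b ->
  (forall x, a <= x <= b -> continuity_pt H x) ->
  (forall x, a < x < b -> ~ In x E -> derivable_pt_lim H x (h x) /\ 0 <= h x) ->
  H a <= H b.
Proof.
  revert a b. induction E as [|e E IH]; intros a b Hab Hc Hd.
  - destruct (Req_dec a b) as [->|Hne]; [lra|].
    assert (pr1 : forall c, a < c < b -> derivable_pt H c).
    { intros c Pc. exists (h c). apply (Hd c Pc). simpl; auto. }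
    assert (pr2 : forall c, a < c < b -> derivable_pt (fun t => t) c).
    { intros; apply derivable_pt_id. }
    destruct (MVT H (fun t => t) a b pr1 pr2 ltac:(lra) Hc (fun c _ => cpt_id c)) as [c [P Heq]].
    rewrite (derive_pt_eq_0 _ _ (h c) (pr1 c P)) in Heq by (apply (Hd c P); simpl; auto).
    rewrite (derive_pt_eq_0 _ _ 1 (pr2 c P)) in Heq by apply derivable_pt_lim_id.
    assert (0 <= h c) by (apply (Hd c P); simpl; auto). nra.
  - assert (Hd' : forall a' b', a <= a' -> b' <= b -> ~ (a' < e < b') ->
              forall x, a' < x < b' -> ~ In x E -> derivable_pt_lim H x (h x) /\ 0 <= h x).
    { intros a' b' Ha Hb He x Hx Hn. apply Hd; [lra|]. intros [->|Hi]; [lra|auto]. }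
    destruct (Rlt_dec a e) as [Hae|Hae]; [destruct (Rlt_dec e b) as [Heb|Heb]|].
    + assert (H a <= H e) by (apply IH; [lra|intros; apply Hc; lra|apply Hd'; lra]).
      assert (H e <= H b) by (apply IH; [lra|intros; apply Hc; lra|apply Hd'; lra]).
      lra.
    + apply IH; auto. apply Hd'; lra.
    + apply IH; auto. apply Hd'; lra.
Qed.

Lemma ex_RInt_cont f a b : (forall x, continuity_pt f x) -> ex_RInt f a b.
Proof.
  intros H. apply (@ex_RInt_continuous R_CompleteNormedModule).
  intros; apply continuity_pt_filterlim; auto.
Qed.

Lemma derivable_pt_lim_RInt G a x :
  (forall x, continuity_pt G x) -> derivable_pt_lim (fun t => RInt G a t) x (G x).
Proof.
  intros HG. apply is_derive_Reals, (is_derive_RInt G (fun t => RInt G a t) a x).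
  - apply filter_forall. intros b. apply (@RInt_correct R_CompleteNormedModule), ex_RInt_cont; auto.
  - apply continuity_pt_filterlim; auto.
Qed.

Lemma RInt_scal_cont f a b c :
  (forall x, continuity_pt f x) -> RInt (fun t => c * f t) a b = c * RInt f a b.
Proof. intros H. exact (@RInt_scal R_CompleteNormedModule f a b c (ex_RInt_cont f a b H)). Qed.

Lemma RInt_plus_cont f g a b : (forall x, continuity_pt f x) -> (forall x, continuity_pt g x) ->
  RInt (fun t => f t + g t) a b = RInt f a b + RInt g a b.
Proof.
  intros Hf Hg.
  exact (@RInt_plus R_CompleteNormedModule f g a b (ex_RInt_cont f a b Hf) (ex_RInt_cont g a b Hg)).
Qed.

Lemma RInt_lin f g a b c d : (forall x, continuity_pt f x) -> (forall x, continuity_pt g x) ->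
  RInt (fun x => c * f x + d * g x) a b = c * RInt f a b + d * RInt g a b.
Proof.
  intros Hf Hg. rewrite RInt_plus_cont, !RInt_scal_cont; auto; intros; cont; auto.
Qed.

Lemma RInt_Chasles_cont f a b c :
  (forall x, continuity_pt f x) -> RInt f a b + RInt f b c = RInt f a c.
Proof.
  intros H.
  exact (@RInt_Chasles R_CompleteNormedModule f a b c (ex_RInt_cont f a b H) (ex_RInt_cont f b c H)).
Qed.

Lemma RInt_rsum (f : nat -> R -> R) m a b : (forall i x, (i < m)%nat -> continuity_pt (f i) x) ->
  RInt (fun x => rsum (fun i => f i x) m) a b = rsum (fun i => RInt (f i) a b) m.
Proof.
  intros H. induction m; simpl.
  - rewrite (@RInt_const R_CompleteNormedModule). unfold scal; simpl; unfold mult; simpl; ring.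
  - rewrite (RInt_plus_cont (fun x => rsum (fun i => f i x) m) (f m)), IHm.
    + reflexivity.
    + intros; apply H; lia.
    + intros; apply cpt_rsum; intros; apply H; lia.
    + intros; apply H; lia.
Qed.

Lemma RInt_le_cont f g a b : a <= b -> (forall x, continuity_pt f x) -> (forall x, continuity_pt g x) ->
  (forall x, a <= x <= b -> f x <= g x) -> RInt f a b <= RInt g a b.
Proof. intros; apply RInt_le; auto; try apply ex_RInt_cont; auto. intros; apply H2; lra. Qed.

Lemma RInt_ge0_cont f a b : a <= b -> (forall x, continuity_pt f x) ->
  (forall x, a <= x <= b -> 0 <= f x) -> 0 <= RInt f a b.
Proof.
  intros Hab Hf H. replace 0 with (RInt (fun _ => 0) a b).
  - apply RInt_le_cont; auto. intros; apply cpt_const.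
  - rewrite (@RInt_const R_CompleteNormedModule). unfold scal; simpl; unfold mult; simpl. ring.
Qed.

Lemma RInt_gt0_cont f a b x0 : a <= x0 <= b -> a < b -> (forall x, continuity_pt f x) ->
  (forall x, a <= x <= b -> 0 <= f x) -> 0 < f x0 -> 0 < RInt f a b.
Proof.
  intros Hx0 Hab Hf Hnn Hpos.
  destruct (Hf x0 (f x0 / 2) ltac:(lra)) as [del [Hdel Hcl]].
  set (c := Rmax a (x0 - del / 2)). set (d := Rmin b (x0 + del / 2)).
  assert (a <= c /\ x0 - del / 2 <= c) by (split; [apply Rmax_l|apply Rmax_r]).
  assert (d <= b /\ d <= x0 + del / 2) by (split; [apply Rmin_l|apply Rmin_r]).
  assert (Hcd : c < d).
  { unfold c, d, Rmax, Rmin. destruct (Rle_dec a (x0 - del / 2)), (Rle_dec b (x0 + del / 2)); lra. }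
  assert (0 <= RInt f a c) by (apply RInt_ge0_cont; auto; [lra|intros; apply Hnn; lra]).
  assert (0 <= RInt f d b) by (apply RInt_ge0_cont; auto; [lra|intros; apply Hnn; lra]).
  assert (0 < RInt f c d).
  { apply RInt_gt_0; auto; [|intros; apply continuity_pt_filterlim; auto].
    intros x Hx. destruct (Req_dec x x0) as [->|Hne]; [lra|].
    assert (Rabs (f x - f x0) < f x0 / 2).
    { apply Hcl. split; [split; [exact I|auto]|]. simpl; unfold R_dist. apply Rabs_def1; lra. }
    apply Rabs_def2 in H3. lra. }
  rewrite <- (RInt_Chasles_cont f a d b), <- (RInt_Chasles_cont f a c d) by auto. lra.
Qed.

Lemma RInt_le_increment (F f G : R -> R) (E : list R) a b : a <= b ->
  (forall x, a <= x <= b -> continuity_pt F x) -> (forall x, continuity_pt G x) ->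
  (forall x, a < x < b -> ~ In x E -> derivable_pt_lim F x (f x) /\ G x <= f x) ->
  RInt G a b <= F b - F a.
Proof.
  intros Hab HF HG Hd.
  assert (M := le_of_derive_ge0_except (fun t => F t - RInt G a t) (fun t => f t - G t) E a b Hab).
  cbv beta in M. rewrite RInt_point in M. cut (F a - 0 <= F b - RInt G a b); [lra|]. apply M.
  - intros x Hx. apply cpt_minus; auto. apply derivable_continuous_pt.
    exists (G x). apply derivable_pt_lim_RInt; auto.
  - intros x Hx Hn. destruct (Hd x Hx Hn) as [H1 H2]. split; [|lra].
    apply dpl_minus; auto. apply derivable_pt_lim_RInt; auto.
Qed.

Lemma RInt_eq_increment (F f : R -> R) (E : list R) a b : a <= b ->
  (forall x, a <= x <= b -> continuity_pt F x) -> (forall x, continuity_pt f x) ->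
  (forall x, a < x < b -> ~ In x E -> derivable_pt_lim F x (f x)) ->
  RInt f a b = F b - F a.
Proof.
  intros Hab HF Hf Hd. apply Rle_antisym.
  - apply (RInt_le_increment F f f E); auto. intros; split; auto; lra.
  - assert (RInt (fun t => -1 * f t) a b <= (fun t => - F t) b - (fun t => - F t) a).
    { apply (RInt_le_increment (fun t => - F t) (fun t => - f t) _ E); auto.
      - intros; apply cpt_opp; auto.
      - intros; cont; auto.
      - intros x Hx Hn. split; [apply dpl_opp; auto|lra]. }
    rewrite RInt_scal_cont in H by auto. lra.
Qed.

Lemma RInt_derive_periodic (F f : R -> R) E s : 0 < s ->
  (forall x, continuity_pt F x) -> (forall x, continuity_pt f x) ->
  (forall x, - s < x < s -> ~ In x E -> derivable_pt_lim F x (f x)) -> F s = F (- s) ->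
  RInt f (- s) s = 0 :> R.
Proof.
  intros Hs HF Hf Hd Hper. rewrite (RInt_eq_increment F f E); auto; lra.
Qed.

Lemma RInt_ext_eq (f g : R -> R) a b : (forall x, f x = g x) -> RInt f a b = RInt g a b.
Proof. intros H. apply RInt_ext. intros; apply H. Qed.

Definition picone_cot (w x0 d x : R) := w * cos (w * (x - x0) + d) / sin (w * (x - x0) + d).

Lemma picone_cot_riccati w x0 d x : sin (w * (x - x0) + d) <> 0 ->
  derivable_pt_lim (picone_cot w x0 d) x (- (w * w) - picone_cot w x0 d x ^ 2).
Proof.
  intros Hs. apply is_derive_Reals. unfold picone_cot. auto_derive; auto.
  replace (x + - x0) with (x - x0) by ring. field; auto.
Qed.

(** Picone's identity: as [g := picone_cot w x0 d] solves [g' = - w^2 - g^2],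
    [- (g f^2)' = w^2 f^2 - f'^2 + (g f - f')^2]. *)
Lemma picone_ineq (f df : R -> R) E a b x0 w d : a <= b ->
  (forall x, continuity_pt f x) -> (forall x, continuity_pt df x) ->
  (forall x, a < x < b -> ~ In x E -> derivable_pt_lim f x (df x)) ->
  (forall x, a <= x <= b -> 0 < sin (w * (x - x0) + d)) ->
  RInt (fun x => w * w * f x ^ 2 - df x ^ 2) a b
    <= picone_cot w x0 d a * f a ^ 2 - picone_cot w x0 d b * f b ^ 2.
Proof.
  intros Hab Hf Hdf Hd Hs. set (g := picone_cot w x0 d).
  assert (Hg : forall x, a <= x <= b -> continuity_pt g x).
  { intros x Hx. apply cpt_div; [cont|apply cpt_sin; cont|specialize (Hs x Hx); lra]. }
  refine (Rle_trans _ _ _ (RInt_le_increment (fun x => - (g x * f x ^ 2))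
    (fun x => - ((- (w * w) - g x ^ 2) * f x ^ 2 + g x * (2 * f x * df x))) _ E a b Hab _ _ _) _);
    [| | |cbv beta; lra].
  - intros x Hx. apply cpt_opp, cpt_mult, cpt_sq; auto.
  - intros x. cont; auto.
  - intros x Hx Hn. split.
    + apply dpl_opp, dpl_mult; [apply picone_cot_riccati|apply dpl_sq; auto].
      specialize (Hs x ltac:(lra)). lra.
    + assert (0 <= (g x * f x - df x) ^ 2) by apply pow2_ge_0. nra.
Qed.

Lemma exists_half_period_point f s : 0 < s -> (forall x, continuity_pt f x) -> f s = f (- s) ->
  exists p, - s <= p <= 0 /\ f p = f (p + s).
Proof.
  intros Hs Hf Hper.
  destruct (IVT_cor (fun x => f x - f (x + s)) (- s) 0) as [p [Hp Hhp]].
  - intros x. apply cpt_minus; auto. apply (cpt_comp (fun t => t + s) f); auto. cont.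
  - lra.
  - replace (0 + s) with s by ring. replace (- s + s) with 0 by ring. rewrite Hper.
    assert (0 <= (f (- s) - f 0) ^ 2) by apply pow2_ge_0. nra.
  - exists p. split; [auto|lra].
Qed.

(** Splitting [[-s, s]] at the two zeros [p], [p + s] of [g] (with the piece [[-s, p]]
    glued after [[p + s, s]] by periodicity), each piece is shorter than [pi / w]. *)
Lemma wirtinger_below_pi (g dg : R -> R) E s p w : 0 < s -> - s <= p <= 0 ->
  (forall x, continuity_pt g x) -> (forall x, continuity_pt dg x) ->
  (forall x, - s < x < s -> ~ In x E -> derivable_pt_lim g x (dg x)) ->
  g s = g (- s) -> g p = 0 -> g (p + s) = 0 -> 0 < w -> w * s < PI ->
  RInt (fun x => w * w * g x ^ 2 - dg x ^ 2) (- s) s <= 0.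
Proof.
  intros Hs Hp Hg Hdg Hd Hper Hgp Hgq Hw Hws.
  set (q := p + s) in *. set (d := (PI - w * s) / 2).
  assert (Hsin : forall t, 0 <= t <= s -> 0 < sin (w * t + d)) by (intros; apply sin_gt_0; unfold d; nra).
  assert (Hc : forall x, continuity_pt (fun x => w * w * g x ^ 2 - dg x ^ 2) x) by (intros; cont; auto).
  assert (I1 := picone_ineq g dg E p q p w d ltac:(unfold q; lra) Hg Hdg
    ltac:(intros; apply Hd; auto; unfold q in *; lra) ltac:(intros; apply Hsin; unfold q in *; lra)).
  assert (I2 := picone_ineq g dg E q s q w d ltac:(unfold q; lra) Hg Hdg
    ltac:(intros; apply Hd; auto; unfold q in *; lra) ltac:(intros; apply Hsin; unfold q in *; lra)).
  assert (I3 := picone_ineq g dg E (- s) p (q - 2 * s) w d ltac:(lra) Hg Hdg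
    ltac:(intros; apply Hd; auto; unfold q in *; lra)
    ltac:(intros x Hx; replace (w * (x - (q - 2 * s)) + d) with (w * (x - q + 2 * s) + d) by ring;
          apply Hsin; unfold q in *; lra)).
  assert (Hcot : picone_cot w (q - 2 * s) d (- s) = picone_cot w q d s).
  { unfold picone_cot. replace (w * (- s - (q - 2 * s)) + d) with (w * (s - q) + d) by ring. auto. }
  rewrite Hgp, Hgq in *. rewrite Hcot, <- Hper in I3.
  rewrite <- (RInt_Chasles_cont _ (- s) q s), <- (RInt_Chasles_cont _ (- s) p q) by auto.
  replace (0 ^ 2) with 0 in * by ring. lra.
Qed.

Lemma sq_mul_le_of_forall_lt A B K : 0 <= A -> 0 <= B -> 0 < K ->
  (forall w, 0 < w < K -> w * w * A <= B) -> K ^ 2 * A <= B.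
Proof.
  intros HA HB HK H. destruct (Rle_dec (K ^ 2 * A) B) as [|Hlt]; [auto|exfalso].
  assert (HA0 : 0 < A) by (destruct (Req_dec A 0); subst; nra).
  set (m := (B / A + K ^ 2) / 2).
  assert (HBA : 0 <= B / A < K ^ 2).
  { split; [apply Rdiv_le_0_compat; lra|].
    apply (Rmult_lt_reg_r A); auto. unfold Rdiv. rewrite Rmult_assoc, Rinv_l; lra. }
  assert (Hm : 0 < m < K ^ 2) by (unfold m; lra).
  assert (Hsq : 0 < sqrt m < K).
  { split; [apply sqrt_lt_R0; lra|]. rewrite <- (sqrt_pow2 K) by lra. apply sqrt_lt_1; lra. }
  specialize (H (sqrt m) Hsq). rewrite sqrt_sqrt in H by lra.
  assert (m <= B / A) by (apply (Rmult_le_reg_r A); auto; unfold Rdiv; rewrite Rmult_assoc, Rinv_l; lra).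
  unfold m in *. lra.
Qed.

Lemma periodic_wirtinger (f df : R -> R) E s : 0 < s ->
  (forall x, continuity_pt f x) -> (forall x, continuity_pt df x) ->
  (forall x, - s < x < s -> ~ In x E -> derivable_pt_lim f x (df x)) -> f s = f (- s) ->
  exists c, forall k, k <= (PI / s) ^ 2 -> 0 <= RInt (fun x => df x ^ 2 - k * (f x - c) ^ 2) (- s) s.
Proof.
  intros Hs Hf Hdf Hd Hper.
  destruct (exists_half_period_point f s Hs Hf Hper) as [p [Hp Hpq]].
  exists (f p). set (g := fun x => f x - f p).
  assert (Hg : forall x, continuity_pt g x) by (intros; unfold g; cont; auto).
  set (A := RInt (fun x => g x ^ 2) (- s) s). set (B := RInt (fun x => df x ^ 2) (- s) s).
  assert (HA : 0 <= A) by (apply RInt_ge0_cont; [lra|intros; cont; auto|intros; apply pow2_ge_0]).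
  assert (HB : 0 <= B) by (apply RInt_ge0_cont; [lra|intros; cont; auto|intros; apply pow2_ge_0]).
  assert (Hlin : forall a b, RInt (fun x => a * df x ^ 2 + b * g x ^ 2) (- s) s = a * B + b * A)
    by (intros; apply RInt_lin; intros; cont; auto).
  assert (HPI : (PI / s) ^ 2 * A <= B).
  { apply sq_mul_le_of_forall_lt; auto.
    { apply Rdiv_lt_0_compat; [apply PI_RGT_0|lra]. }
    intros w [Hw0 Hw1].
    assert (Hws : w * s < PI).
    { apply (Rmult_lt_compat_r s) in Hw1; [|lra]. unfold Rdiv in Hw1.
      rewrite Rmult_assoc, Rinv_l in Hw1; lra. }
    assert (W := wirtinger_below_pi g df E s p w Hs Hp Hg Hdf
      ltac:(intros x Hx Hn; apply (dpl_eq _ _ (df x - 0)); [|ring];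
            apply dpl_minus; [apply Hd; auto|apply derivable_pt_lim_const])
      ltac:(unfold g; rewrite Hper; auto) ltac:(unfold g; ring) ltac:(unfold g; rewrite <- Hpq; ring)
      Hw0 Hws).
    replace (RInt _ (- s) s) with ((-1) * B + (w * w) * A) in W
      by (rewrite <- Hlin; apply RInt_ext_eq; intros; ring).
    lra. }
  intros k Hk.
  replace (RInt (fun x => df x ^ 2 - k * (f x - f p) ^ 2) (- s) s) with (1 * B + (- k) * A)
    by (rewrite <- Hlin; apply RInt_ext_eq; intros; unfold g; ring).
  destruct (Rle_dec k 0); nra.
Qed.

Definition twist_angle (th : R) := Rmin th (2 * PI - th).

(** [v] is the frequency [+- twist_angle th / (2 s)] for which [2 v s = th (mod 2 pi)]. *)
Lemma twist_frequency s th : 0 < s -> 0 < th < 2 * PI -> exists v,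
  v ^ 2 = (twist_angle th / (2 * s)) ^ 2 /\ 4 * v ^ 2 <= (PI / s) ^ 2 /\
  cos th = cos (2 * (v * s)) /\ sin th = sin (2 * (v * s)).
Proof.
  intros Hs Hth. unfold twist_angle, Rmin.
  assert (Hsq : forall a, 0 <= a <= PI -> 4 * (a / (2 * s)) ^ 2 <= (PI / s) ^ 2).
  { intros a Ha. replace (4 * (a / (2 * s)) ^ 2) with ((a / s) ^ 2) by (field; lra).
    apply pow_incr. split; [apply Rdiv_le_0_compat; lra|].
    unfold Rdiv; apply Rmult_le_compat_r; [left; apply Rinv_0_lt_compat|]; lra. }
  destruct (Rle_dec th (2 * PI - th)).
  - exists (th / (2 * s)). replace (2 * (th / (2 * s) * s)) with th by (field; lra).
    repeat split; auto. apply Hsq; lra.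
  - exists ((th - 2 * PI) / (2 * s)).
    replace (2 * ((th - 2 * PI) / (2 * s) * s)) with (th - 2 * PI) by (field; lra).
    rewrite cos_minus, sin_minus, cos_2PI, sin_2PI. repeat split; try ring.
    + field; lra.
    + replace (4 * ((th - 2 * PI) / (2 * s)) ^ 2) with (4 * ((2 * PI - th) / (2 * s)) ^ 2)
        by (field; lra). apply Hsq; lra.
Qed.

(** The components of [e^{- i v x} (u1 x + i u2 x)]. *)
Definition rot1 (v : R) (u1 u2 : R -> R) x := cos (v * x) * u1 x + sin (v * x) * u2 x.
Definition rot2 (v : R) (u1 u2 : R -> R) x := - sin (v * x) * u1 x + cos (v * x) * u2 x.

Lemma cpt_rot v u1 u2 x : continuity_pt u1 x -> continuity_pt u2 x ->
  continuity_pt (rot1 v u1 u2) x /\ continuity_pt (rot2 v u1 u2) x.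
Proof. intros; unfold rot1, rot2; split; cont; auto. Qed.

Lemma dpl_rot v u1 u2 du1 du2 x :
  derivable_pt_lim u1 x (du1 x) -> derivable_pt_lim u2 x (du2 x) ->
  derivable_pt_lim (rot1 v u1 u2) x (rot1 v du1 du2 x + v * rot2 v u1 u2 x) /\
  derivable_pt_lim (rot2 v u1 u2) x (rot2 v du1 du2 x - v * rot1 v u1 u2 x).
Proof.
  intros D1 D2.
  assert (Dc : derivable_pt_lim (fun t => cos (v * t)) x (- v * sin (v * x)))
    by (apply is_derive_Reals; auto_derive; auto; ring).
  assert (Ds : derivable_pt_lim (fun t => sin (v * t)) x (v * cos (v * x)))
    by (apply is_derive_Reals; auto_derive; auto; ring).
  unfold rot1, rot2. split.
  - eapply dpl_eq; [exact (dpl_plus _ _ _ _ _ (dpl_mult _ _ _ _ _ Dc D1) (dpl_mult _ _ _ _ _ Ds D2))|].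
    cbv beta; ring.
  - eapply dpl_eq;
      [exact (dpl_plus _ _ _ _ _ (dpl_mult _ _ _ _ _ (dpl_opp _ _ _ Ds) D1) (dpl_mult _ _ _ _ _ Dc D2))|].
    cbv beta; ring.
Qed.

Lemma rot_periodic v s (u1 u2 : R -> R) :
  u1 s = cos (2 * (v * s)) * u1 (- s) - sin (2 * (v * s)) * u2 (- s) ->
  u2 s = sin (2 * (v * s)) * u1 (- s) + cos (2 * (v * s)) * u2 (- s) ->
  rot1 v u1 u2 s = rot1 v u1 u2 (- s) /\ rot2 v u1 u2 s = rot2 v u1 u2 (- s).
Proof.
  intros H1 H2. unfold rot1, rot2.
  replace (v * - s) with (- (v * s)) by ring.
  rewrite cos_neg, sin_neg, H1, H2, cos_2a, sin_2a.
  assert (Hp := sin2_cos2 (v * s)). unfold Rsqr in Hp.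
  set (C := cos (v * s)) in *. set (S := sin (v * s)) in *.
  split; [transitivity ((S * S + C * C) * (C * u1 (- s) - S * u2 (- s)))
         |transitivity ((S * S + C * C) * (S * u1 (- s) + C * u2 (- s)))]; try ring; rewrite Hp; ring.
Qed.

(** In the rotating frame [z = e^{- i v x} u] one has
    [|z'|^2 + 2 v (z1 z2' - z2 z1') = |u'|^2 - v^2 |u|^2]; completing squares then
    trades [z] for [z - c]. *)
Lemma rotating_frame_le C S u1 u2 du1 du2 v c1 c2 : C * C + S * S = 1 ->
  let z1 := C * u1 + S * u2 in let z2 := - S * u1 + C * u2 in
  let dz1 := C * du1 + S * du2 + v * z2 in let dz2 := - S * du1 + C * du2 - v * z1 in
  / 2 * (dz1 ^ 2 - 4 * v ^ 2 * (z1 - c1) ^ 2) + / 2 * (dz2 ^ 2 - 4 * v ^ 2 * (z2 - c2) ^ 2)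
   + 2 * v * (c1 * dz2 - c2 * dz1) <= du1 ^ 2 + du2 ^ 2 - v ^ 2 * (u1 ^ 2 + u2 ^ 2).
Proof.
  intros H z1 z2 dz1 dz2.
  assert (Hid : dz1 ^ 2 + dz2 ^ 2 + 2 * v * (z1 * dz2 - z2 * dz1)
                = (C * C + S * S) * (du1 ^ 2 + du2 ^ 2 - v ^ 2 * (u1 ^ 2 + u2 ^ 2)))
    by (unfold dz1, dz2, z1, z2; ring).
  rewrite H, Rmult_1_l in Hid. rewrite <- Hid.
  assert (0 <= (dz2 + 2 * v * (z1 - c1)) ^ 2 + (dz1 - 2 * v * (z2 - c2)) ^ 2)
    by (apply Rplus_le_le_0_compat; apply pow2_ge_0).
  nra.
Qed.

Lemma twisted_wirtinger (u1 u2 du1 du2 : R -> R) E s th : 0 < s -> 0 < th < 2 * PI ->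
  (forall x, continuity_pt u1 x) -> (forall x, continuity_pt u2 x) ->
  (forall x, continuity_pt du1 x) -> (forall x, continuity_pt du2 x) ->
  (forall x, - s < x < s -> ~ In x E ->
     derivable_pt_lim u1 x (du1 x) /\ derivable_pt_lim u2 x (du2 x)) ->
  u1 s = cos th * u1 (- s) - sin th * u2 (- s) -> u2 s = sin th * u1 (- s) + cos th * u2 (- s) ->
  0 <= RInt (fun x => du1 x ^ 2 + du2 x ^ 2 - (twist_angle th / (2 * s)) ^ 2 * (u1 x ^ 2 + u2 x ^ 2))
          (- s) s.
Proof.
  intros Hs Hth Hu1 Hu2 Hd1 Hd2 Hd Hb1 Hb2.
  destruct (twist_frequency s th Hs Hth) as [v [Hv2 [Hv4 [Hc Hsn]]]].
  rewrite Hc, Hsn in Hb1, Hb2. rewrite <- Hv2.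
  destruct (rot_periodic v s u1 u2 Hb1 Hb2) as [P1 P2].
  set (z1 := rot1 v u1 u2) in *. set (z2 := rot2 v u1 u2) in *.
  set (dz1 := fun x => rot1 v du1 du2 x + v * z2 x).
  set (dz2 := fun x => rot2 v du1 du2 x - v * z1 x).
  assert (Cz : forall x, continuity_pt z1 x /\ continuity_pt z2 x) by (intros; apply cpt_rot; auto).
  assert (Cdz : forall x, continuity_pt dz1 x /\ continuity_pt dz2 x).
  { intros x. destruct (Cz x), (cpt_rot v du1 du2 x (Hd1 x) (Hd2 x)).
    unfold dz1, dz2; split; cont; auto. }
  assert (Dz : forall x, - s < x < s -> ~ In x E ->
             derivable_pt_lim z1 x (dz1 x) /\ derivable_pt_lim z2 x (dz2 x))
    by (intros x Hx Hn; destruct (Hd x Hx Hn); apply dpl_rot; auto).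
  destruct (periodic_wirtinger z1 dz1 E s Hs (fun x => proj1 (Cz x)) (fun x => proj1 (Cdz x))
              (fun x Hx Hn => proj1 (Dz x Hx Hn)) P1) as [c1 W1].
  destruct (periodic_wirtinger z2 dz2 E s Hs (fun x => proj2 (Cz x)) (fun x => proj2 (Cdz x))
              (fun x Hx Hn => proj2 (Dz x Hx Hn)) P2) as [c2 W2].
  specialize (W1 _ Hv4). specialize (W2 _ Hv4).
  set (F1 := fun x => dz1 x ^ 2 - 4 * v ^ 2 * (z1 x - c1) ^ 2) in *.
  set (F2 := fun x => dz2 x ^ 2 - 4 * v ^ 2 * (z2 x - c2) ^ 2) in *.
  set (F3 := fun x => c1 * dz2 x - c2 * dz1 x).
  assert (CF : forall x, continuity_pt F1 x /\ continuity_pt F2 x /\ continuity_pt F3 x)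
    by (intros x; destruct (Cz x), (Cdz x); unfold F1, F2, F3; repeat split; cont; auto).
  assert (J : RInt F3 (- s) s = 0 :> R).
  { refine (RInt_derive_periodic (fun x => c1 * z2 x - c2 * z1 x) F3 E s Hs _
              (fun x => proj2 (proj2 (CF x))) _ _).
    - intros x. destruct (Cz x). cont; auto.
    - intros x Hx Hn. destruct (Dz x Hx Hn). apply dpl_minus; apply derivable_pt_lim_scal; auto.
    - cbv beta. rewrite P1, P2. reflexivity. }
  assert (Hsum : RInt (fun x => / 2 * F1 x + / 2 * F2 x + 2 * v * F3 x) (- s) s
                 = / 2 * RInt F1 (- s) s + / 2 * RInt F2 (- s) s + 2 * v * RInt F3 (- s) s :> R).
  { rewrite (RInt_ext_eq _ (fun x => 1 * (/ 2 * F1 x + / 2 * F2 x) + (2 * v) * F3 x)) by (intros; ring).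
    rewrite !RInt_lin; try (intros; apply CF); [ring|].
    intros x. destruct (CF x) as [? [? ?]]. cont; auto. }
  assert (Hle := RInt_le_cont (fun x => / 2 * F1 x + / 2 * F2 x + 2 * v * F3 x)
     (fun x => du1 x ^ 2 + du2 x ^ 2 - v ^ 2 * (u1 x ^ 2 + u2 x ^ 2)) (- s) s ltac:(lra)
     ltac:(intros x; destruct (CF x) as [? [? ?]]; cont; auto) ltac:(intros; cont; auto)).
  rewrite Hsum, J in Hle. enough (Hpt : forall x, - s <= x <= s -> _) by (specialize (Hle Hpt); lra).
  intros x _. assert (Hp := sin2_cos2 (v * x)). unfold Rsqr in Hp. rewrite Rplus_comm in Hp.
  exact (rotating_frame_le (cos (v * x)) (sin (v * x)) (u1 x) (u2 x) (du1 x) (du2 x) v c1 c2 Hp).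
Qed.

Definition sqnorm (m : nat) (u : nat -> R) := rsum (fun k => u k ^ 2) m.
Definition matvec (n : nat) (M : nat -> nat -> R) (u : nat -> R) (i : nat) := rsum (fun j => M i j * u j) n.

Lemma sqnorm_ge0 m u : 0 <= sqnorm m u.
Proof. apply rsum_ge0; intros; apply pow2_ge_0. Qed.

Lemma sqnorm_eq0 m u : sqnorm m u = 0 -> forall k, (k < m)%nat -> u k = 0.
Proof.
  intros H k Hk. assert (u k ^ 2 = 0).
  { apply (rsum_ge0_eq0 (fun k => u k ^ 2) m); auto. intros; apply pow2_ge_0. }
  nra.
Qed.

Lemma sqnorm0 m : sqnorm m (fun _ => 0) = 0.
Proof. unfold sqnorm. rewrite (rsum_ext _ (fun _ => 0)), rsum0 by (intros; ring). reflexivity. Qed.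

Lemma matvec0 n M : sqnorm n (matvec n M (fun _ => 0)) = 0.
Proof.
  unfold sqnorm, matvec. rewrite (rsum_ext _ (fun _ => 0)); [apply rsum0|].
  intros i _. rewrite (rsum_ext _ (fun _ => 0)), rsum0 by (intros; ring). ring.
Qed.

Lemma opnorm_nonneg n M r : is_opnorm n M r -> 0 <= r.
Proof.
  intros [Hub _]. eapply Rle_trans; [apply sqrt_pos|]. apply Hub. exists (fun _ => 0). split.
  - change (sqnorm n (fun _ => 0) <= 1). rewrite sqnorm0. lra.
  - reflexivity.
Qed.

Lemma opnorm_exists n M : exists r, is_opnorm n M r.
Proof.
  unfold is_opnorm.
  match goal with |- exists r, is_lub ?S r => destruct (completeness S) as [r Hr]; [| |exists r; exact Hr] end.
  - exists (sqrt (rsum (fun i => (rsum (fun j => Rabs (M i j)) n) ^ 2) n)).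
    intros t [v [Hv ->]]. apply sqrt_le_1_alt, rsum_le. intros i Hi.
    assert (Hvj : forall j, (j < n)%nat -> Rabs (v j) <= 1).
    { intros j Hj.
      assert (v j ^ 2 <= rsum (fun j => v j ^ 2) n)
        by (apply (rsum_term_le (fun j => v j ^ 2)); [intros; apply pow2_ge_0|auto]).
      assert (Rabs (v j) ^ 2 = v j ^ 2) by apply pow2_abs.
      assert (0 <= Rabs (v j)) by apply Rabs_pos. nra. }
    assert (Rabs (rsum (fun j => M i j * v j) n) <= rsum (fun j => Rabs (M i j)) n).
    { eapply Rle_trans; [apply rsum_abs|]. apply rsum_le. intros j Hj. rewrite Rabs_mult.
      specialize (Hvj j Hj). assert (0 <= Rabs (M i j)) by apply Rabs_pos. nra. }
    assert (0 <= Rabs (rsum (fun j => M i j * v j) n)) by apply Rabs_pos.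
    rewrite <- (pow2_abs (rsum (fun j => M i j * v j) n)). nra.
  - exists (sqrt 0). exists (fun _ => 0). split.
    + change (sqnorm n (fun _ => 0) <= 1). rewrite sqnorm0. lra.
    + change (sqrt 0 = sqrt (sqnorm n (matvec n M (fun _ => 0)))). rewrite matvec0. reflexivity.
Qed.

Lemma opnorm_bound n M r u : is_opnorm n M r ->
  sqnorm n (matvec n M u) <= r ^ 2 * sqnorm n u.
Proof.
  intros Hr. assert (Hr0 := opnorm_nonneg n M r Hr). destruct Hr as [Hub _].
  set (a := sqnorm n u). set (W := sqnorm n (matvec n M u)).
  assert (Ha : 0 <= a) by apply sqnorm_ge0. assert (HW : 0 <= W) by apply sqnorm_ge0.
  destruct (Req_dec a 0) as [Ha0|Ha0].
  - assert (Hu := sqnorm_eq0 n u Ha0).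
    replace W with (sqnorm n (matvec n M (fun _ => 0))); [rewrite matvec0; nra|].
    unfold W, sqnorm, matvec. apply rsum_ext. intros i Hi. f_equal.
    apply rsum_ext. intros j Hj. rewrite Hu; auto.
  - set (t := sqrt a). assert (Ht : 0 < t) by (apply sqrt_lt_R0; lra).
    assert (Htt : t * t = a) by (apply sqrt_sqrt; lra).
    assert (Hw : sqnorm n (matvec n M (fun j => u j / t)) = W / a).
    { unfold W, sqnorm. rewrite <- Htt.
      transitivity (/ (t * t) * rsum (fun i => matvec n M u i ^ 2) n); [|field; lra].
      rewrite <- rsum_scal. apply rsum_ext. intros i Hi. unfold matvec.
      rewrite (rsum_ext _ (fun j => / t * (M i j * u j))) by (intros; field; lra).
      rewrite rsum_scal. field; lra. }
    assert (Hs : sqrt (W / a) <= r).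
    { rewrite <- Hw. apply Hub. exists (fun j => u j / t). split; [|reflexivity].
      rewrite (rsum_ext _ (fun j => / (t * t) * u j ^ 2)) by (intros; field; lra).
      rewrite rsum_scal. fold (sqnorm n u). fold a. rewrite Htt. right; field; lra. }
    assert (HWa : 0 <= W / a) by (apply Rdiv_le_0_compat; lra).
    assert (W / a <= r ^ 2).
    { rewrite <- (sqrt_sqrt (W / a)) by auto. assert (0 <= sqrt (W / a)) by apply sqrt_pos. nra. }
    apply (Rmult_le_reg_r (/ a)); [apply Rinv_0_lt_compat; lra|].
    replace (r ^ 2 * a * / a) with (r ^ 2) by (field; lra). auto.
Qed.

Lemma opnorm_quad n M r u : is_opnorm n M r ->
  rsum (fun i => u i * matvec n M u i) n <= r * sqnorm n u.
Proof.
  intros Hr. assert (Hr0 := opnorm_nonneg n M r Hr). assert (HW := opnorm_bound n M r u Hr).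
  set (a := sqnorm n u) in *. set (w := matvec n M u) in *.
  assert (Ha : 0 <= a) by apply sqnorm_ge0.
  destruct (Req_dec r 0) as [->|Hrpos].
  - assert (Hw0 : sqnorm n w = 0) by (assert (0 <= sqnorm n w) by apply sqnorm_ge0; nra).
    rewrite (rsum_ext _ (fun _ => 0)), rsum0 by (intros i Hi; rewrite (sqnorm_eq0 n w Hw0); auto; ring).
    lra.
  - (* AM-GM termwise: [u_i w_i <= (r u_i^2 + w_i^2 / r) / 2] *)
    apply Rle_trans with (/ 2 * (r * a) + / 2 * (/ r * sqnorm n w)).
    + unfold a, sqnorm. rewrite <- !rsum_scal, <- rsum_plus. apply rsum_le. intros i Hi.
      assert (0 <= (r * u i - w i) ^ 2) by apply pow2_ge_0.
      apply (Rmult_le_reg_l r); [lra|]. field_simplify; [nra|lra].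
    + apply (Rmult_le_reg_l r); [lra|]. field_simplify; [nra|lra].
Qed.

Lemma vsupnorm_opnorm n L V N x : is_Vsupnorm n L V N -> - L <= x <= L ->
  exists r, is_opnorm n (fun i j => V i j x) r /\ r <= N.
Proof.
  intros [Hub _] Hx. destruct (opnorm_exists n (fun i j => V i j x)) as [r Hr].
  exists r; split; auto. apply Hub. exists x; auto.
Qed.

Lemma vsupnorm_ge0 n L V N : is_Vsupnorm n L V N -> 0 <= L -> 0 <= N.
Proof.
  intros H HL. destruct (vsupnorm_opnorm n L V N 0 H ltac:(lra)) as [r [Hr HrN]].
  assert (0 <= r) by (eapply opnorm_nonneg; eauto). lra.
Qed.

Lemma VI2_quad_le n L V N x u : is_Vsupnorm n L V N -> - L <= x <= L ->
  rsum (fun k => u k * VI2 n V x u k) (2 * n) <= N * sqnorm (2 * n) u.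
Proof.
  intros HN Hx. destruct (vsupnorm_opnorm n L V N x HN Hx) as [r [Hr HrN]].
  assert (Hr0 : 0 <= r) by (eapply opnorm_nonneg; eauto).
  set (ue := fun i => u (2 * i)%nat). set (uo := fun i => u (2 * i + 1)%nat).
  assert (Hsq : sqnorm (2 * n) u = sqnorm n ue + sqnorm n uo)
    by (unfold sqnorm; rewrite rsum_even_odd, rsum_plus; reflexivity).
  assert (Hdiv : forall i b, (b < 2)%nat -> ((2 * i + b) / 2 = i)%nat /\ ((2 * i + b) mod 2 = b)%nat).
  { intros i b Hb.
    split; symmetry; [apply (Nat.div_unique _ _ _ b)|apply (Nat.mod_unique _ _ i)]; lia. }
  rewrite rsum_even_odd.
  rewrite (rsum_ext _ (fun i => ue i * matvec n (fun i j => V i j x) ue i +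
                                uo i * matvec n (fun i j => V i j x) uo i)).
  - rewrite rsum_plus, Hsq.
    assert (H1 := opnorm_quad n _ r ue Hr). assert (H2 := opnorm_quad n _ r uo Hr).
    assert (0 <= sqnorm n ue) by apply sqnorm_ge0. assert (0 <= sqnorm n uo) by apply sqnorm_ge0.
    nra.
  - intros i Hi. unfold VI2, matvec, ue, uo.
    destruct (Hdiv i 0%nat) as [A1 A2]; [lia|]. destruct (Hdiv i 1%nat) as [B1 B2]; [lia|].
    rewrite Nat.add_0_r in A1, A2. rewrite A1, B1.
    f_equal; f_equal; apply rsum_ext; intros j Hj; do 2 f_equal; [rewrite A2|rewrite B2]; lia.
Qed.

Definition twisted_solution n V th s lam (y dy : R -> nat -> R) : Prop :=
  (forall k x, (k < 2 * n)%nat -> continuity_pt (fun t => y t k) x /\ continuity_pt (fun t => dy t k) x) /\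
  (exists E : list R, forall x, - s < x < s -> ~ In x E -> forall k, (k < 2 * n)%nat ->
     derivable_pt_lim (fun t => y t k) x (dy x k) /\
     derivable_pt_lim (fun t => dy t k) x (lam * y x k - VI2 n V x (y x) k)) /\
  rot_bc n th (y (- s)) (y s) /\ rot_bc n th (dy (- s)) (dy s).

Definition spectral_gap (N th s lam : R) :=
  N < lam \/ (0 < th < 2 * PI /\ 2 * (N - lam) < (twist_angle th / (2 * s)) ^ 2).

Lemma rot_bc_dot n th a b c d : rot_bc n th a b -> rot_bc n th c d ->
  rsum (fun k => b k * d k) (2 * n) = rsum (fun k => a k * c k) (2 * n).
Proof.
  intros Hab Hcd. rewrite !rsum_even_odd. apply rsum_ext. intros i Hi.
  destruct (Hab i Hi) as [B1 B2]. destruct (Hcd i Hi) as [B3 B4]. rewrite B1, B2, B3, B4.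
  assert (H1 := sin2_cos2 th). unfold Rsqr in H1.
  set (C := cos th) in *. set (S := sin th) in *.
  transitivity ((S * S + C * C) * (a (2 * i)%nat * c (2 * i)%nat + a (2 * i + 1)%nat * c (2 * i + 1)%nat));
    [ring|rewrite H1; ring].
Qed.

Lemma cpt_sqnorm m (u : R -> nat -> R) x : (forall k, (k < m)%nat -> continuity_pt (fun t => u t k) x) ->
  continuity_pt (fun t => sqnorm m (u t)) x.
Proof. intros H. apply cpt_rsum. intros k Hk. apply cpt_sq, H; auto. Qed.

Section TwistedSolution.

Variables (n : nat) (L : R) (V : nat -> nat -> R -> R) (N th s lam : R) (y dy : R -> nat -> R).
Hypothesis HN : is_Vsupnorm n L V N.
Hypothesis Hs : 0 < s <= L.
Hypothesis Hsol : twisted_solution n V th s lam y dy.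

Let Y x := sqnorm (2 * n) (y x).
Let D x := sqnorm (2 * n) (dy x).

Lemma twisted_cont : forall x, continuity_pt Y x /\ continuity_pt D x.
Proof. destruct Hsol as [Hc _]. intros x; split; apply cpt_sqnorm; intros; apply Hc; auto. Qed.

(** [(y . y')' = |y'|^2 + lam |y|^2 - y . V y], and [y . y'] takes equal values at [-s] and [s]. *)
Lemma twisted_energy_le : RInt (fun x => D x + (lam - N) * Y x) (- s) s <= 0.
Proof.
  destruct Hsol as [Hc [[E Hd] [Hby Hbdy]]].
  set (F := fun x => rsum (fun k => y x k * dy x k) (2 * n)).
  replace 0 with (F s - F (- s)) by (unfold F; rewrite (rot_bc_dot n th _ _ _ _ Hby Hbdy); ring).
  apply (RInt_le_increment F
    (fun x => rsum (fun k => dy x k * dy x k + y x k * (lam * y x k - VI2 n V x (y x) k)) (2 * n)) _ E).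
  - lra.
  - intros x _. apply cpt_rsum. intros k Hk. apply cpt_mult; apply Hc; auto.
  - intros x. destruct (twisted_cont x). cont; auto.
  - intros x Hx Hn. split.
    + apply dpl_rsum. intros k Hk. destruct (Hd x Hx Hn k Hk). apply dpl_mult; auto.
    + rewrite (rsum_ext _ (fun k => dy x k ^ 2 + lam * y x k ^ 2 - y x k * VI2 n V x (y x) k))
        by (intros; ring).
      rewrite rsum_minus, rsum_plus, rsum_scal.
      assert (HV := VI2_quad_le n L V N x (y x) HN ltac:(lra)).
      unfold D, Y, sqnorm in *. lra.
Qed.

Lemma twisted_wirtinger_sum : 0 < th < 2 * PI ->
  0 <= RInt (fun x => D x - (twist_angle th / (2 * s)) ^ 2 * Y x) (- s) s.
Proof.
  intros Hth. destruct Hsol as [Hc [[E Hd] [Hby _]]].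
  set (nu2 := (twist_angle th / (2 * s)) ^ 2).
  set (W := fun i x => dy x (2 * i)%nat ^ 2 + dy x (2 * i + 1)%nat ^ 2
                       - nu2 * (y x (2 * i)%nat ^ 2 + y x (2 * i + 1)%nat ^ 2)).
  rewrite (RInt_ext_eq _ (fun x => rsum (fun i => W i x) n)).
  - rewrite RInt_rsum.
    + apply rsum_ge0. intros i Hi. destruct (Hby i Hi) as [B1 B2].
      apply (twisted_wirtinger _ _ (fun t => dy t (2 * i)%nat) (fun t => dy t (2 * i + 1)%nat) E s th);
        auto; try lra; try (intros; apply Hc; lia).
      intros x Hx Hn. split; apply (Hd x Hx Hn); lia.
    + intros i x Hi. unfold W. cont; apply Hc; lia.
  - intros x. unfold D, Y, W, sqnorm. rewrite !rsum_even_odd.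
    rewrite rsum_minus, rsum_scal. reflexivity.
Qed.

Lemma twisted_coercive : spectral_gap N th s lam ->
  exists a b, 0 < a /\ 0 < b /\ RInt (fun x => a * D x + b * Y x) (- s) s <= 0.
Proof.
  intros [Hlam|[Hth Hgap]].
  - exists 1, (lam - N). repeat split; try lra.
    eapply Rle_trans; [|apply twisted_energy_le]. right. apply RInt_ext_eq. intros; ring.
  - set (nu2 := (twist_angle th / (2 * s)) ^ 2) in *.
    exists (/ 2), (lam - N + nu2 / 2). repeat split; try lra.
    assert (HE := twisted_energy_le). assert (HW := twisted_wirtinger_sum Hth).
    assert (Hc := twisted_cont).
    rewrite (RInt_ext_eq (fun x => / 2 * D x + (lam - N + nu2 / 2) * Y x)
               (fun x => 1 * (D x + (lam - N) * Y x) + (- / 2) * (D x - nu2 * Y x))) by (intros; lra).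
    rewrite RInt_lin; [fold nu2 in HW; lra| |]; intros x; destruct (Hc x); cont; auto.
Qed.

Lemma twisted_solution_trivial : spectral_gap N th s lam ->
  forall x k, - s <= x <= s -> (k < 2 * n)%nat -> y x k = 0 /\ dy x k = 0.
Proof.
  intros Hgap x k Hx Hk. destruct (twisted_coercive Hgap) as [a [b [Ha [Hb HI]]]].
  assert (HY := sqnorm_ge0 (2 * n) (y x)). assert (HD := sqnorm_ge0 (2 * n) (dy x)).
  assert (HP : a * D x + b * Y x = 0).
  { destruct (Req_dec (a * D x + b * Y x) 0) as [|Hne]; auto. exfalso.
    assert (0 < RInt (fun x => a * D x + b * Y x) (- s) s); [|lra].
    apply (RInt_gt0_cont _ _ _ x); try lra.
    - intros t; destruct (twisted_cont t); cont; auto.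
    - intros t _. assert (HY' := sqnorm_ge0 (2 * n) (y t)).
      assert (HD' := sqnorm_ge0 (2 * n) (dy t)). unfold Y, D. nra.
    - unfold Y, D in *. nra. }
  unfold Y, D in HP. split; [apply (sqnorm_eq0 (2 * n) (y x))|apply (sqnorm_eq0 (2 * n) (dy x))];
    auto; nra.
Qed.

End TwistedSolution.

Definition clamp a b x := Rmax a (Rmin b x).

Lemma clamp_in a b x : a <= b -> a <= clamp a b x <= b.
Proof. intros; unfold clamp, Rmax, Rmin; repeat destruct Rle_dec; lra. Qed.
Lemma clamp_id a b x : a <= x <= b -> clamp a b x = x.
Proof. intros; unfold clamp, Rmax, Rmin; repeat destruct Rle_dec; lra. Qed.
Lemma clamp_lipschitz a b x t : a <= b -> Rabs (clamp a b t - clamp a b x) <= Rabs (t - x).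
Proof.
  intros; unfold clamp, Rmax, Rmin; repeat destruct Rle_dec; unfold Rabs; repeat destruct Rcase_abs; lra.
Qed.

(** Solutions only live on an interval; precomposing with [clamp] makes them continuous on [R]
    (as the integration lemmas require) without changing them there. *)
Lemma cpt_clamp f a b : a <= b -> cont_on f a b -> forall x, continuity_pt (fun t => f (clamp a b t)) x.
Proof.
  intros Hab Hc x eps Heps.
  destruct (Hc (clamp a b x) (clamp_in a b x Hab) eps Heps) as [alp [Halp H]].
  exists alp. split; auto. intros t [_ Ht]. simpl in *. unfold R_dist in *.
  destruct (Req_dec (clamp a b t) (clamp a b x)) as [E|E].
  - rewrite E. unfold Rminus; rewrite Rplus_opp_r, Rabs_R0; auto.
  - apply H. split; [apply clamp_in; auto|]. simpl; unfold R_dist.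
    eapply Rle_lt_trans; [apply clamp_lipschitz|]; auto.
Qed.

Lemma dpl_clamp f a b x l : a < x < b -> derivable_pt_lim f x l ->
  derivable_pt_lim (fun t => f (clamp a b t)) x l.
Proof.
  intros Hx H eps Heps. destruct (H eps Heps) as [d Hd].
  assert (Hm : 0 < Rmin d (Rmin (x - a) (b - x)))
    by (repeat apply Rmin_glb_lt; try apply cond_pos; lra).
  exists (mkposreal _ Hm). intros h Hh0 Hh. simpl in Hh.
  assert (Rmin d (Rmin (x - a) (b - x)) <= d) by apply Rmin_l.
  assert (Rmin d (Rmin (x - a) (b - x)) <= Rmin (x - a) (b - x)) by apply Rmin_r.
  assert (Rmin (x - a) (b - x) <= x - a) by apply Rmin_l.
  assert (Rmin (x - a) (b - x) <= b - x) by apply Rmin_r.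
  rewrite !clamp_id; [apply Hd; auto; lra|lra|].
  unfold Rabs in Hh; destruct Rcase_abs in Hh; lra.
Qed.

Definition extend a b (u : R -> nat -> R) : R -> nat -> R := fun t k => u (clamp a b t) k.

Lemma extend_id a b u x : a <= x <= b -> extend a b u x = u x.
Proof. intros Hx. unfold extend. rewrite clamp_id; auto. Qed.

Lemma eigenvalue_twisted_solution n V th s lam : 0 < s -> is_eigenvalue n V th s lam ->
  exists y dy, twisted_solution n V th s lam y dy /\
    exists x k, - s <= x <= s /\ (k < 2 * n)%nat /\ y x k <> 0.
Proof.
  intros Hs [y [dy [Hc [[E HE] [By [Bdy [x0 [k0 [Hx0 [Hk0 Hnz]]]]]]]]]].
  exists (extend (- s) s y), (extend (- s) s dy). split.
  - unfold twisted_solution.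
    rewrite !(extend_id (- s) s _ (- s)), !(extend_id (- s) s _ s) by lra.
    refine (conj _ (conj _ (conj By Bdy))).
    + intros k x Hk. split; [apply (cpt_clamp (fun t => y t k))|apply (cpt_clamp (fun t => dy t k))];
        try lra; apply Hc; auto.
    + exists E. intros x Hx Hn k Hk. rewrite !extend_id by lra.
      destruct (HE x Hx Hn k Hk).
      split; [apply (dpl_clamp (fun t => y t k))|apply (dpl_clamp (fun t => dy t k))]; auto.
  - exists x0, k0. rewrite extend_id; auto.
Qed.

(** Uniqueness for [f' = - c J f], [c = th / (2 s)]: the error against the explicit rotation has
    constant norm, and vanishes at [-s]. *)
Lemma rotation_flow (f1 f2 : R -> R) E s th : 0 < s ->
  (forall x, continuity_pt f1 x) -> (forall x, continuity_pt f2 x) ->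
  (forall x, - s < x < s -> ~ In x E ->
     derivable_pt_lim f1 x (- (th / (2 * s)) * f2 x) /\ derivable_pt_lim f2 x ((th / (2 * s)) * f1 x)) ->
  f1 s = cos th * f1 (- s) - sin th * f2 (- s) /\ f2 s = sin th * f1 (- s) + cos th * f2 (- s).
Proof.
  intros Hs C1 C2 Hd. set (c := th / (2 * s)). set (A := f1 (- s)). set (B := f2 (- s)).
  set (e1 := fun x => f1 x - (cos (c * (x + s)) * A - sin (c * (x + s)) * B)).
  set (e2 := fun x => f2 x - (sin (c * (x + s)) * A + cos (c * (x + s)) * B)).
  set (Q := fun x => e1 x ^ 2 + e2 x ^ 2).
  assert (CQ : forall x, continuity_pt Q x) by (intros; unfold Q, e1, e2; cont; auto).
  assert (DQ : forall x, - s < x < s -> ~ In x E -> derivable_pt_lim Q x 0).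
  { intros x Hx Hn. destruct (Hd x Hx Hn) as [D1 D2].
    assert (T1 : derivable_pt_lim (fun x => cos (c * (x + s)) * A - sin (c * (x + s)) * B) x
                   (- c * (sin (c * (x + s)) * A + cos (c * (x + s)) * B)))
      by (apply is_derive_Reals; auto_derive; auto; ring).
    assert (T2 : derivable_pt_lim (fun x => sin (c * (x + s)) * A + cos (c * (x + s)) * B) x
                   (c * (cos (c * (x + s)) * A - sin (c * (x + s)) * B)))
      by (apply is_derive_Reals; auto_derive; auto; ring).
    eapply dpl_eq; [apply dpl_plus; apply dpl_sq; apply dpl_minus; eauto|].
    unfold e1, e2. fold c. ring. }
  assert (M1 := le_of_derive_ge0_except Q (fun _ => 0) E (- s) s ltac:(lra) ltac:(auto)
                  ltac:(intros x Hx Hn; split; [apply DQ|lra]; auto)).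
  assert (M2 := le_of_derive_ge0_except (fun x => - Q x) (fun _ => 0) E (- s) s ltac:(lra)
                  ltac:(intros; cont; auto)
                  ltac:(intros x Hx Hn; split; [apply (dpl_eq _ _ (- 0)); [apply dpl_opp, DQ|]; auto|]; lra)).
  assert (Q0 : Q (- s) = 0).
  { unfold Q, e1, e2. replace (c * (- s + s)) with 0 by ring. rewrite cos_0, sin_0. unfold A, B. ring. }
  assert (Qs : Q s = 0) by (cbv beta in M2; lra).
  unfold Q in Qs. assert (0 <= e1 s ^ 2) by apply pow2_ge_0. assert (0 <= e2 s ^ 2) by apply pow2_ge_0.
  assert (Z1 : e1 s = 0) by nra. assert (Z2 : e2 s = 0) by nra.
  unfold e1, e2 in Z1, Z2. replace (c * (s + s)) with th in Z1, Z2 by (unfold c; field; lra).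
  split; lra.
Qed.

Lemma Phi_blocks n s p w j : (j < 4 * n)%nat ->
  Phi n s p w j = p (- s) j /\ Phi n s p w (j + 4 * n) = w (- s) j /\
  Phi n s p w (j + 8 * n) = p s j /\ Phi n s p w (j + 12 * n) = w s j.
Proof.
  intros Hj. unfold Phi.
  destruct (Nat.ltb_spec j (4 * n)), (Nat.ltb_spec (j + 4 * n) (4 * n)), (Nat.ltb_spec (j + 4 * n) (8 * n)),
    (Nat.ltb_spec (j + 8 * n) (4 * n)), (Nat.ltb_spec (j + 8 * n) (8 * n)), (Nat.ltb_spec (j + 8 * n) (12 * n)),
    (Nat.ltb_spec (j + 12 * n) (4 * n)), (Nat.ltb_spec (j + 12 * n) (8 * n)),
    (Nat.ltb_spec (j + 12 * n) (12 * n)); try lia.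
  repeat split; f_equal; lia.
Qed.

Lemma traces_agree n s p w : inXX n (Phi n s p w) ->
  forall j, (j < 4 * n)%nat -> w (- s) j = p (- s) j /\ w s j = p s j.
Proof.
  intros [X1 X2] j Hj. destruct (Phi_blocks n s p w j Hj) as [F1 [F2 [F3 F4]]].
  destruct (Nat.lt_ge_cases j (2 * n)) as [Hj2|Hj2].
  - destruct (X1 j Hj2) as [A1 _]. destruct (X2 j Hj2) as [A2 _].
    replace (j + 4 * n + 8 * n)%nat with (j + 12 * n)%nat in A2 by lia.
    rewrite F1, F2 in A1. rewrite F3, F4 in A2. auto.
  - destruct (X1 (j - 2 * n)%nat ltac:(lia)) as [_ A1]. destruct (X2 (j - 2 * n)%nat ltac:(lia)) as [_ A2].
    replace (j - 2 * n + 2 * n)%nat with j in A1 by lia.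
    replace (j - 2 * n + 6 * n)%nat with (j + 4 * n)%nat in A1 by lia.
    replace (j - 2 * n + 2 * n + 8 * n)%nat with (j + 8 * n)%nat in A2 by lia.
    replace (j - 2 * n + 6 * n + 8 * n)%nat with (j + 12 * n)%nat in A2 by lia.
    rewrite F1, F2 in A1. rewrite F3, F4 in A2. auto.
Qed.

Lemma Phi_nonzero n s p w : inXX n (Phi n s p w) ->
  (exists k, (k < 16 * n)%nat /\ Phi n s p w k <> 0) ->
  exists j, (j < 4 * n)%nat /\ (p (- s) j <> 0 \/ p s j <> 0).
Proof.
  intros HX [k [Hk Hnz]]. assert (Hw := traces_agree n s p w HX).
  destruct (Nat.lt_ge_cases k (4 * n)) as [H1|H1]; [|destruct (Nat.lt_ge_cases k (8 * n)) as [H2|H2];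
    [|destruct (Nat.lt_ge_cases k (12 * n)) as [H3|H3]]].
  - exists k. destruct (Phi_blocks n s p w k H1) as [F _]. rewrite F in Hnz. split; [lia|auto].
  - exists (k - 4 * n)%nat. destruct (Phi_blocks n s p w (k - 4 * n) ltac:(lia)) as [_ [F _]].
    replace (k - 4 * n + 4 * n)%nat with k in F by lia.
    rewrite F, (proj1 (Hw (k - 4 * n)%nat ltac:(lia))) in Hnz.
    split; [lia|auto].
  - exists (k - 8 * n)%nat. destruct (Phi_blocks n s p w (k - 8 * n) ltac:(lia)) as [_ [_ [F _]]].
    replace (k - 8 * n + 8 * n)%nat with k in F by lia. rewrite F in Hnz. split; [lia|auto].
  - exists (k - 12 * n)%nat. destruct (Phi_blocks n s p w (k - 12 * n) ltac:(lia)) as [_ [_ [_ F]]].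
    replace (k - 12 * n + 12 * n)%nat with k in F by lia.
    rewrite F, (proj2 (Hw (k - 12 * n)%nat ltac:(lia))) in Hnz.
    split; [lia|auto].
Qed.

Lemma cpt_extend d a b (u : R -> nat -> R) : a <= b ->
  (forall k, (k < d)%nat -> cont_on (fun t => u t k) a b) ->
  forall k x, (k < d)%nat -> continuity_pt (fun t => extend a b u t k) x.
Proof. intros Hab Hc k x Hk. apply (cpt_clamp (fun t => u t k)); auto. Qed.

Lemma B_flow_rot_bc n L s th w : 0 < s <= L ->
  ac_sol (4 * n) (- L) L (fun _ v => B_apply s th v) w -> rot_bc (2 * n) th (w (- s)) (w s).
Proof.
  intros Hs [Cw [E HE]] m Hm. set (wc := extend (- L) L w).
  assert (Hc := cpt_extend (4 * n) (- L) L w ltac:(lra) Cw).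
  assert (R := rotation_flow (fun t => wc t (2 * m)%nat) (fun t => wc t (2 * m + 1)%nat) E s th
                 ltac:(lra) ltac:(intros; apply Hc; lia) ltac:(intros; apply Hc; lia)).
  unfold wc in R. rewrite !extend_id in R by lra. apply R.
  intros x Hx Hn. unfold wc. rewrite extend_id by lra. split.
  - apply (dpl_clamp (fun t => w t (2 * m)%nat)); [lra|].
    replace (- (th / (2 * s)) * w x (2 * m + 1)%nat) with (B_apply s th (w x) (2 * m)).
    + apply HE; auto; try lra; lia.
    + unfold B_apply. rewrite Nat.even_even. do 3 f_equal. lia.
  - apply (dpl_clamp (fun t => w t (2 * m + 1)%nat)); [lra|].
    replace (th / (2 * s) * w x (2 * m)%nat) with (B_apply s th (w x) (2 * m + 1)).
    + apply HE; auto; try lra; lia.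
    + unfold B_apply. rewrite Nat.even_odd. do 2 f_equal. lia.
Qed.

Lemma rot_bc_halves n th a b : rot_bc (2 * n) th a b ->
  rot_bc n th a b /\ rot_bc n th (fun k => a (k + 2 * n)%nat) (fun k => b (k + 2 * n)%nat).
Proof.
  intros H. split; intros i Hi.
  - apply H; lia.
  - destruct (H (i + n)%nat ltac:(lia)) as [R1 R2].
    replace (2 * (i + n))%nat with (2 * i + 2 * n)%nat in R1, R2 by lia.
    replace (2 * i + 2 * n + 1)%nat with (2 * i + 1 + 2 * n)%nat in R1, R2 by lia. auto.
Qed.

(** At a crossing, the first half of [p] is [y] and the second half is [y'];
    the conditions [p = w] at [+- s] transfer to [p] the rotation undergone by [w]. *)
Lemma crossing_twisted_solution n V L th s lam : 0 < s <= L -> is_crossing n V L th s lam ->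
  exists y dy, twisted_solution n V th s lam y dy /\
    exists x k, (x = - s \/ x = s) /\ (k < 2 * n)%nat /\ (y x k <> 0 \/ dy x k <> 0).
Proof.
  intros Hs [p [w [[[Cp [Ep HEp]] Hw] [HX Hnz]]]].
  assert (Hpw := traces_agree n s p w HX).
  assert (Hrot : rot_bc (2 * n) th (p (- s)) (p s)).
  { intros m Hm. destruct (Hpw (2 * m)%nat ltac:(lia)) as [Q1 Q2].
    destruct (Hpw (2 * m + 1)%nat ltac:(lia)) as [Q3 Q4].
    rewrite <- Q1, <- Q2, <- Q3, <- Q4. apply (B_flow_rot_bc n L s th w); auto. }
  destruct (rot_bc_halves n th _ _ Hrot) as [Hy Hdy].
  set (y := extend (- L) L p). set (dy := fun t k => y t (k + 2 * n)%nat).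
  assert (Hc := cpt_extend (4 * n) (- L) L p ltac:(lra) Cp).
  exists y, dy. split.
  - unfold twisted_solution, dy, y. rewrite !(extend_id (- L) L p) by lra.
    refine (conj _ (conj _ (conj Hy Hdy))).
    + intros k x Hk. split; apply Hc; lia.
    + exists Ep. intros x Hx Hn k Hk. rewrite extend_id by lra. split.
      * apply (dpl_clamp (fun t => p t k)); [lra|].
        replace (p x (k + 2 * n)%nat) with (A_apply n V lam x (p x) k).
        -- apply HEp; auto; try lra; lia.
        -- unfold A_apply. destruct (Nat.ltb_spec k (2 * n)); [auto|lia].
      * apply (dpl_clamp (fun t => p t (k + 2 * n)%nat)); [lra|].
        replace (lam * p x k - VI2 n V x (p x) k) with (A_apply n V lam x (p x) (k + 2 * n)).
        -- apply HEp; auto; try lra; lia.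
        -- unfold A_apply. destruct (Nat.ltb_spec (k + 2 * n) (2 * n)); [lia|].
           replace (k + 2 * n - 2 * n)%nat with k by lia. auto.
  - destruct (Phi_nonzero n s p w HX Hnz) as [j [Hj Hpj]].
    assert (Hyx : forall x, x = - s \/ x = s -> y x = p x)
      by (intros x Hx; apply extend_id; lra).
    destruct (Nat.lt_ge_cases j (2 * n)) as [Hj2|Hj2].
    + destruct Hpj; [exists (- s)|exists s]; exists j; rewrite Hyx by auto; repeat split; auto.
    + destruct Hpj; [exists (- s)|exists s]; exists (j - 2 * n)%nat; unfold dy;
        rewrite Hyx by auto; replace (j - 2 * n + 2 * n)%nat with j by lia; repeat split; auto; lia.
Qed.

Lemma no_eigenvalue n L V N th s lam : is_Vsupnorm n L V N -> 0 < s <= L ->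
  spectral_gap N th s lam -> ~ is_eigenvalue n V th s lam.
Proof.
  intros HN Hs Hgap Heig.
  destruct (eigenvalue_twisted_solution n V th s lam ltac:(lra) Heig) as [y [dy [Hsol [x [k [Hx [Hk Hnz]]]]]]].
  apply Hnz, (twisted_solution_trivial n L V N th s lam y dy HN Hs Hsol Hgap x k Hx Hk).
Qed.

Lemma no_crossing n L V N th s lam : is_Vsupnorm n L V N -> 0 < s <= L ->
  spectral_gap N th s lam -> ~ is_crossing n V L th s lam.
Proof.
  intros HN Hs Hgap Hcr.
  destruct (crossing_twisted_solution n V L th s lam Hs Hcr) as [y [dy [Hsol [x [k [Hx [Hk Hnz]]]]]]].
  destruct (twisted_solution_trivial n L V N th s lam y dy HN Hs Hsol Hgap x k ltac:(lra) Hk).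
  tauto.
Qed.

Lemma spectral_gap_small_s N th s lam lam_inf : 0 <= N -> 0 < th < 2 * PI -> N < lam_inf ->
  0 <= lam <= lam_inf -> 0 < s -> s < / 2 * twist_angle th / sqrt (N + lam_inf) ->
  spectral_gap N th s lam.
Proof.
  intros HN0 Hth Hli Hlam Hs Hsm. right. split; auto.
  set (K := N + lam_inf) in *. assert (HK : 0 < sqrt K) by (apply sqrt_lt_R0; unfold K; lra).
  assert (Htw : 0 < twist_angle th) by (unfold twist_angle; apply Rmin_glb_lt; lra).
  assert (H1 : sqrt K < twist_angle th / (2 * s)).
  { apply (Rmult_lt_compat_r (sqrt K)) in Hsm; auto. unfold Rdiv in *.
    rewrite Rmult_assoc, Rinv_l in Hsm by lra.
    apply (Rmult_lt_reg_r s); auto. replace (twist_angle th * / (2 * s) * s) with (/ 2 * twist_angle th)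
      by (field; lra). lra. }
  assert (H2 : K < (twist_angle th / (2 * s)) ^ 2).
  { rewrite <- (sqrt_sqrt K) by (unfold K; lra). simpl. rewrite Rmult_1_r.
    apply Rmult_le_0_lt_compat; lra. }
  unfold K in H2. lra.
Qed.

(** V(x) y <= N |y|^2] on [[-L, L]] enters, through [twisted_energy_le]. *)
Theorem lemma3p12
  (n : nat) (L : R) (V : nat -> nat -> R -> R) (N : R)
  (Hn : (1 <= n)%nat) (HL : 0 < L)
  (Hsym : forall i j x, (i < n)%nat -> (j < n)%nat -> V i j x = V j i x)
  (Hper : forall i j x, (i < n)%nat -> (j < n)%nat -> V i j (x + 2 * L) = V i j x)
  (Hpc : forall i j, (i < n)%nat -> (j < n)%nat -> piecewise_continuous (V i j))
  (HN : is_Vsupnorm n L V N) :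
  (* (i) *)
  (forall theta lam_inf : R, 0 <= theta <= 2 * PI -> N < lam_inf ->
     (forall s, 0 < s <= L -> ~ is_eigenvalue n V theta s lam_inf) /\
     (forall s0, 0 < s0 < L ->
        forall s, s0 <= s <= L -> ~ is_crossing n V L theta s lam_inf)) /\
  (* (ii) *)
  (forall theta lam_inf s0 : R, 0 < theta < 2 * PI -> N < lam_inf ->
     0 < s0 -> s0 < L ->
     s0 < / 2 * Rmin theta (2 * PI - theta) / sqrt (N + lam_inf) ->
     (forall lam, 0 <= lam <= lam_inf -> ~ is_eigenvalue n V theta s0 lam) /\
     (forall lam, 0 <= lam <= lam_inf -> ~ is_crossing n V L theta s0 lam)).
Proof.
  assert (HN0 : 0 <= N) by (apply (vsupnorm_ge0 n L V N HN); lra).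
  split.
  - intros th li Hth Hli. split.
    + intros s Hs. apply (no_eigenvalue n L V N); auto. left; auto.
    + intros s0 Hs0 s Hs. apply (no_crossing n L V N); [auto|lra|left; auto].
  - intros th li s0 Hth Hli Hs0 Hs0L Hsm.
    assert (Hgap : forall lam, 0 <= lam <= li -> spectral_gap N th s0 lam)
      by (intros; apply (spectral_gap_small_s N th s0 lam li); auto).
    split; intros lam Hlam.
    + apply (no_eigenvalue n L V N); auto; lra.
    + apply (no_crossing n L V N); auto; lra.
Qed.
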